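(* Let $\sigma$ be a $2\times 2$ Hermitian matrix of the form $\sigma=n_x\sigma_x+n_y\sigma_y+n_z\sigma_z$ with $(n_x,n_y,n_z)\in\mathbb{R}^3$ a unit vector (so $\sigma^2=I$ and $\mathrm{Tr}\,\sigma=0$), acting on a qubit system $C$. Consider the tripartite graph state $|h_3\rangle=CZ_{(a,b)}CZ_{(a,c)}|+\rangle^{\otimes 3}$ on qubits $a$ (controller Alice), $b$ (Bob), $c$ (Charlie), after Charlie applies $U_{c,C}=|0\rangle\langle0|_c\otimes I_C+|1\rangle\langle1|_c\otimes\sigma$, giving the hybrid object $$S=\tfrac12|+\rangle_a\big(|00\rangle_{bc}\otimes I_C+|11\rangle_{bc}\otimes\sigma\big)+\tfrac12|-\rangle_a\big(|10\rangle_{bc}\otimes I_C+|01\rangle_{bc}\otimes\sigma\big).$$ Without Alice's participation, Bob and Charlie choose orthonormal bases $\{|\beta_1\rangle,|\beta_2\rangle\}$ and $\{|\gamma_1\rangle,|\gamma_2\rangle\}$ of $\mathbb{C}^2$ and measure qubits $b$ and $c$ in them. For outcome $(j,k)$, set $c_{st}=\langle\beta_j|s\rangle\langle\gamma_k|t\rangle$ ($s,t\in\{0,1\}$); the residual object is $$T_{jk}=\tfrac12|+\rangle_a\otimes(c_{00}I_C+c_{11}\sigma)+\tfrac12|-\rangle_a\otimes(c_{10}I_C+c_{01}\sigma),$$ and each outcome $(j,k)$ occurs with probability $p(j,k)=\frac14\sum_{s,t}|c_{st}|^2=\frac14$. Say outcome $(j,k)$ realizes $e^{i\alpha\sigma}$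 if $T_{jk}=|\chi\rangle_a\otimes\lambda\, e^{i\alpha\sigma}$ for some nonzero vector $|\chi\rangle\in\mathbb{C}^2$ and nonzero scalar $\lambda\in\mathbb{C}$; the success rate for $\alpha$ (for a given choice of bases) is the total probability of outcomes that realize $e^{i\alpha\sigma}$. Then, for $\alpha\in[0,2\pi)$, the remote operation $e^{i\alpha\sigma}$ can be realized probabilistically in this way, with success rate (maximized over the choice of bases) equal to $50\%$ for $\alpha\in\{0,\frac{\pi}{4},\frac{\pi}{2},\frac{3\pi}{4},\pi,\frac{5\pi}{4},\frac{3\pi}{2},\frac{7\pi}{4}\}$, and equal to $25\%$ for $\alpha\in\bigcup_{m=0}^{7}\big(\frac{m\pi}{4},\frac{(m+1)\pi}{4}\big)$.
   Context: $|\pm\rangle=(|0\rangle\pm|1\rangle)/\sqrt2$; $\sigma_x,\sigma_y,\sigma_z$ are the Pauli matrices; $CZ_{(a,b)}$ is the controlled-$Z$ gate $\mathrm{diag}(1,1,1,-1)$ on qubits $a,b$. Note $e^{i\alpha\sigma}=\cos\alpha\, I+i\sin\alpha\,\sigma$, so $e^{i\alpha\sigma}$ and $e^{i(\alpha+\pi)\sigma}$ are proportional. In the paper's protocol, with Alice's cooperation (an $X$-basis measurement of qubit $a$ plus classical communication) the operation $e^{i\alpha\sigma}$ on an unknown state of $C$ can be implemented deterministically; this proposition quantifies what Bob and Charlie alone can achieve by local rank-one projective measurements on $b$ and $c$ that disentangle qubit $a$. *)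

From HB Require Import structures.
From mathcomp Require Import all_boot all_order all_algebra.
From mathcomp Require Import complex.
From mathcomp Require Import boolp reals trigo.
Set Implicit Arguments. Unset Strict Implicit. Unset Printing Implicit Defensive.
Import Order.TTheory GRing.Theory Num.Theory.
Local Open Scope ring_scope.

Section Defs.
Variable R : realType.
Local Notation C := (R[i]).

Definition rC (x : R) : C := Complex x 0.
Definition iC : C := Complex 0 1.

Definition sigma_x : 'M[C]_2 := \matrix_(i < 2, j < 2) (if i == j then 0 else 1).
Definition sigma_y : 'M[C]_2 :=
  \matrix_(i < 2, j < 2)
    (if i == j then 0 else if (i == 0 :> nat) then - iC else iC).
Definition sigma_z : 'M[C]_2 :=
  \matrix_(i < 2, j < 2) (if i == j then (if (i == 0 :> nat) then 1 else -1) else 0).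

Definition sigma_n (nx ny nz : R) : 'M[C]_2 :=
  rC nx *: sigma_x + rC ny *: sigma_y + rC nz *: sigma_z.

(* e^{i alpha sigma} = cos alpha I + i sin alpha sigma  (valid since sigma^2 = I) *)
Definition exp_i_sigma (alpha : R) (sigma : 'M[C]_2) : 'M[C]_2 :=
  rC (cos alpha) *: 1%:M + (iC * rC (sin alpha)) *: sigma.

Definition ket (s : 'I_2) : 'cV[C]_2 := \col_(i < 2) (if i == s then 1 else 0).
Definition ket_plus : 'cV[C]_2 := \col_(i < 2) (rC (Num.sqrt 2))^-1.
Definition ket_minus : 'cV[C]_2 :=
  \col_(i < 2) (if (i == 0 :> nat) then (rC (Num.sqrt 2))^-1 else - (rC (Num.sqrt 2))^-1).

Definition braket (u v : 'cV[C]_2) : C := \sum_(i < 2) conjc (u i 0) * v i 0.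

Definition orthonormal_basis (b : 'I_2 -> 'cV[C]_2) : Prop :=
  forall j k : 'I_2, braket (b j) (b k) = (if j == k then 1 else 0).

Definition coef (beta gamma : 'I_2 -> 'cV[C]_2) (j k s t : 'I_2) : C :=
  braket (beta j) (ket s) * braket (gamma k) (ket t).

(* residual object T_{jk}: an element of C^2_a (x) M_2(C); it is represented by
   its components along the computational basis |0>_a, |1>_a of qubit a:
   T_{jk} = sum_i |i>_a (x) (T i). *)
Definition residual (sigma : 'M[C]_2) (beta gamma : 'I_2 -> 'cV[C]_2) (j k : 'I_2)
    : 'I_2 -> 'M[C]_2 :=
  let c := coef beta gamma j k in
  fun i => (2%:R^-1 * ket_plus i 0) *: (c 0 0 *: 1%:M + c 1 1 *: sigma)
         + (2%:R^-1 * ket_minus i 0) *: (c 1 0 *: 1%:M + c 0 1 *: sigma).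

Definition realizes (sigma : 'M[C]_2) (beta gamma : 'I_2 -> 'cV[C]_2)
    (alpha : R) (j k : 'I_2) : Prop :=
  exists (chi : 'cV[C]_2) (lambda : C), chi != 0 /\ lambda != 0 /\
    forall i : 'I_2, residual sigma beta gamma j k i
                     = (chi i 0 * lambda) *: exp_i_sigma alpha sigma.

Definition sqmod (z : C) : R := complex.Re z ^+ 2 + complex.Im z ^+ 2.

Definition prob (beta gamma : 'I_2 -> 'cV[C]_2) (j k : 'I_2) : R :=
  4%:R^-1 * \sum_(s < 2) \sum_(t < 2) sqmod (coef beta gamma j k s t).

Definition success_rate (sigma : 'M[C]_2) (beta gamma : 'I_2 -> 'cV[C]_2)
    (alpha : R) : R :=
  \sum_(j < 2) \sum_(k < 2)
     (if `[< realizes sigma beta gamma alpha j k >] then prob beta gamma j k else 0).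

Definition max_success_rate (sigma : 'M[C]_2) (alpha r : R) : Prop :=
  (exists beta gamma, orthonormal_basis beta /\ orthonormal_basis gamma /\
       success_rate sigma beta gamma alpha = r)
  /\ (forall beta gamma, orthonormal_basis beta -> orthonormal_basis gamma ->
       success_rate sigma beta gamma alpha <= r).

End Defs.

From HB Require Import structures.
From mathcomp Require Import all_boot all_order all_algebra.
From mathcomp Require Import complex.
From mathcomp Require Import boolp reals trigo.
From mathcomp Require Import ring lra.
Set Implicit Arguments. Unset Strict Implicit. Unset Printing Implicit Defensive.
Import Order.TTheory GRing.Theory Num.Theory.
Local Open Scope ring_scope.

(* With b = <β_j| and g = <γ_k| the bras of Bob's and Charlie's outcomes, the residual
   object consists of the branches (b0 + b1) (g0 I + g1 σ) and (b0 - b1) (g0 I - g1 σ)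
   along |+>_a and |->_a, up to a common nonzero factor.  Only tr σ = 0 and σ != 0 are
   used: they make I and σ linearly independent, so with e^{iασ} = e0 I + e1 σ
   (e0 = cos α, e1 = i sin α) outcome (j, k) realizes e^{iασ} iff
   (b0 + b1) (g0 e1 - g1 e0) = 0 = (b0 - b1) (g0 e1 + g1 e0).  Every outcome has
   probability 1/4.  For fixed b one of b0 + b1, b0 - b1 is nonzero, which confines g to
   a line, so at most one outcome per row of Bob realizes: the rate is at most 1/2.  If
   sin 4α != 0, i.e. e0 e1 != 0 and |e0| != |e1|, a realizing outcome has b ∝ (1, ±1)
   and g ∝ (e0, ±e1) with a common sign, and a second realizing outcome would make Bob's
   two bras proportional or Charlie's two bras non-orthogonal: the rate is at most 1/4.
   Bob measuring in the |±> basis and Charlie in a basis whose first bra is (e0, e1)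
   attains both bounds: the outcome (|+>, first vector) always realizes, and some outcome
   (|->, k) does exactly when e0 e1 = 0 or |e0| = |e1|, i.e. when sin 4α = 0. *)

Lemma ord2P (i : 'I_2) : i = 0 \/ i = 1.
Proof. by case: i => -[|[|//]] ?; [left | right]; apply: val_inj. Qed.

Lemma sum_ord2 (V : nmodType) (F : 'I_2 -> V) : \sum_(i < 2) F i = F 0 + F 1.
Proof. by rewrite big_ord_recl big_ord1; congr (_ + F _); apply: val_inj. Qed.

Section IndicatorSums.
Variables (R : numDomainType) (I : finType) (P : I -> Prop) (q : R).

Lemma sum_indicator_le : 0 <= q -> (forall i i', P i -> P i' -> i = i') ->
  \sum_i (if `[< P i >] then q else 0) <= q.
Proof.
move=> q_ge0 P_unique; have [[i Pi]|noP] := pselect (exists i, P i).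
  rewrite (bigD1 i) ?asboolT //= big1 ?addr0 // => i' /negPf ne_i'i.
  by case: asboolP => // /(P_unique _ _ Pi) ei; rewrite ei eqxx in ne_i'i.
by rewrite big1 // => i _; case: asboolP => // Pi; case: noP; exists i.
Qed.

Lemma sum_indicator_ge i : 0 <= q -> P i -> q <= \sum_i (if `[< P i >] then q else 0).
Proof.
move=> q_ge0 Pi; rewrite (bigD1 i) ?asboolT //= lerDl.
by apply: sumr_ge0 => j _; case: ifP.
Qed.

End IndicatorSums.

Section PlaneGeometry.
Variable F : fieldType.

Lemma collinear_trans (a0 a1 x0 x1 y0 y1 : F) : (a0 != 0) || (a1 != 0) ->
  x0 * a1 = x1 * a0 -> y0 * a1 = y1 * a0 -> x0 * y1 = x1 * y0.
Proof.
move=> a_neq0 /eqP; rewrite -subr_eq0 => /eqP xa; move/eqP; rewrite -subr_eq0 => /eqP ya.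
apply/eqP; rewrite -subr_eq0; apply/eqP.
have det_a0 : a0 * (x0 * y1 - x1 * y0) = y0 * (x0 * a1 - x1 * a0) - x0 * (y0 * a1 - y1 * a0).
  by ring.
have det_a1 : a1 * (x0 * y1 - x1 * y0) = y1 * (x0 * a1 - x1 * a0) - x1 * (y0 * a1 - y1 * a0).
  by ring.
rewrite xa ya !mulr0 subrr in det_a0 det_a1.
by case/orP: a_neq0 => [/mulfI|/mulfI]; apply; rewrite mulr0.
Qed.

Lemma collinear_scale (e0 e1 x0 x1 : F) : (e0 != 0) || (e1 != 0) ->
  x0 * e1 = x1 * e0 -> exists mu, x0 = mu * e0 /\ x1 = mu * e1.
Proof.
move=> e_neq0 xe; have [e0_eq0|e0_neq0] := eqVneq e0 0.
  have e1_neq0 : e1 != 0 by rewrite e0_eq0 eqxx in e_neq0.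
  exists (x1 / e1); rewrite divfK //; split=> //.
  by apply: (mulIf e1_neq0); rewrite xe e0_eq0 !mulr0 mul0r.
by exists (x0 / e0); rewrite divfK // mulrAC xe mulfK.
Qed.

Lemma collinear_fst_neq0 (a0 a1 x0 x1 : F) :
  a0 != 0 -> (x0 != 0) || (x1 != 0) -> x0 * a1 = x1 * a0 -> x0 != 0.
Proof.
move=> a0_neq0 x_neq0 xa; apply: contraTneq x_neq0 => x0_eq0.
move: xa; rewrite x0_eq0 mul0r => /esym/eqP.
by rewrite mulf_eq0 (negbTE a0_neq0) orbF => /eqP ->; rewrite eqxx.
Qed.

End PlaneGeometry.

Lemma sum_diff_neq0 (F : numFieldType) (x y : F) :
  (x != 0) || (y != 0) -> (x + y != 0) || (x - y != 0).
Proof.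
apply: contraTT; rewrite !negb_or !negbK => /andP[/eqP sum0 /eqP diff0].
have : 2%:R * x = (x + y) + (x - y) by ring.
rewrite sum0 diff0 addr0 => /eqP; rewrite mulf_eq0 pnatr_eq0 /= => /eqP x0.
by move: sum0; rewrite x0 add0r => ->; rewrite eqxx.
Qed.

Lemma lin_comb_traceless_inj (F : numFieldType) n (A : 'M[F]_n.+1) (x y x' y' : F) :
  \tr A = 0 -> A != 0 ->
  x *: 1%:M + y *: A = x' *: 1%:M + y' *: A -> x = x' /\ y = y'.
Proof.
move=> trA A_neq0 /eqP; rewrite -subr_eq0 => /eqP eq_comb.
have diff : (x - x') *: 1%:M + (y - y') *: A = 0.
  by rewrite -[RHS]eq_comb; apply/matrixP => i j; rewrite !mxE; ring.
have x_eq : x = x'.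
  apply/eqP; rewrite -subr_eq0; apply/eqP.
  have := congr1 mxtrace diff; rewrite mxtraceD !mxtraceZ mxtrace1 trA mulr0 addr0 mxtrace0.
  by move/eqP; rewrite mulf_eq0 pnatr_eq0 orbF => /eqP.
split=> //; move: diff; rewrite x_eq subrr scale0r add0r => /eqP.
by rewrite scaler_eq0 (negbTE A_neq0) orbF subr_eq0 => /eqP.
Qed.

Section RealizingPairs.
Variables (F : numFieldType) (e0 e1 : F).

Definition realizing_pair (b0 b1 g0 g1 : F) : Prop :=
  (b0 + b1) * (g0 * e1 - g1 * e0) = 0 /\ (b0 - b1) * (g0 * e1 + g1 * e0) = 0.

Lemma realizing_pair_collinear (b0 b1 g0 g1 g0' g1' : F) :
  (e0 != 0) || (e1 != 0) -> (b0 != 0) || (b1 != 0) ->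
  realizing_pair b0 b1 g0 g1 -> realizing_pair b0 b1 g0' g1' -> g0 * g1' = g1 * g0'.
Proof.
move=> e_neq0 b_neq0 [sum_g diff_g] [sum_g' diff_g'].
case/orP: (sum_diff_neq0 b_neq0) => [bsum|bdiff].
- move/eqP: sum_g; move/eqP: sum_g'.
  rewrite !mulf_eq0 (negbTE bsum) /= !subr_eq0 => /eqP ge' /eqP ge.
  exact: collinear_trans e_neq0 ge ge'.
- move/eqP: diff_g; move/eqP: diff_g'.
  rewrite !mulf_eq0 (negbTE bdiff) /= !addr_eq0 -!mulrN => /eqP ge' /eqP ge.
  by apply: collinear_trans ge ge'; rewrite oppr_eq0.
Qed.

Lemma realizing_pair_generic (b0 b1 g0 g1 : F) : e0 != 0 -> e1 != 0 ->
  (b0 != 0) || (b1 != 0) -> (g0 != 0) || (g1 != 0) -> realizing_pair b0 b1 g0 g1 ->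
  (b0 = b1 /\ g0 * e1 = g1 * e0) \/ (b0 = - b1 /\ g0 * - e1 = g1 * e0).
Proof.
move=> e0_neq0 e1_neq0 b_neq0 g_neq0 [/eqP + /eqP]; rewrite !mulf_eq0 => sum_g diff_g.
have ge_neq0 : (g0 * e1 != 0) || (g1 * e0 != 0).
  by case/orP: g_neq0 => ?; apply/orP; [left | right]; rewrite mulf_neq0.
have := sum_diff_neq0 b_neq0; case/orP: (sum_diff_neq0 ge_neq0) => [gsum|gdiff].
- move: diff_g; rewrite (negbTE gsum) orbF => bdiff; rewrite bdiff orbF => bsum.
  move: sum_g; rewrite (negbTE bsum) /= subr_eq0 => /eqP ge.
  by left; split=> //; apply/eqP; rewrite -subr_eq0.
- move: sum_g; rewrite (negbTE gdiff) orbF => bsum; rewrite bsum /= => bdiff.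
  move: diff_g; rewrite (negbTE bdiff) /= addr_eq0 => /eqP ge.
  by right; split; [apply/eqP; rewrite -addr_eq0 | rewrite mulrN ge opprK].
Qed.

Lemma not_collinear_both (g0 g1 : F) : e0 != 0 -> e1 != 0 -> (g0 != 0) || (g1 != 0) ->
  g0 * e1 = g1 * e0 -> g0 * - e1 = g1 * e0 -> False.
Proof.
move=> e0_neq0 e1_neq0 g_neq0 ge; have g0_neq0 := collinear_fst_neq0 e0_neq0 g_neq0 ge.
rewrite -ge mulrN => /eqP; rewrite eq_sym -addr_eq0 -mulr2n mulrn_eq0 /= mulf_eq0.
by rewrite (negbTE g0_neq0) (negbTE e1_neq0).
Qed.

Lemma realizing_pair_plus (h : F) : realizing_pair h h e0 e1.
Proof. by split; [rewrite (mulrC e1) subrr mulr0 | rewrite subrr mul0r]. Qed.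

Lemma realizing_pair_minus (h g0 g1 : F) :
  g0 * e1 + g1 * e0 = 0 -> realizing_pair h (- h) g0 g1.
Proof. by move=> ge; split; [rewrite subrr mul0r | rewrite ge mulr0]. Qed.

End RealizingPairs.

Lemma opposite_collinear_not_orthogonal (R : rcfType) (e0 e1 g0 g1 g0' g1' : R[i]) :
  e0 != 0 -> e0 * e0^*%C != e1 * e1^*%C ->
  (g0 != 0) || (g1 != 0) -> (g0' != 0) || (g1' != 0) ->
  g0 * e1 = g1 * e0 -> g0' * - e1 = g1' * e0 -> g0 * g0'^*%C + g1 * g1'^*%C != 0.
Proof.
move=> e0_neq0 K_neq0 g_neq0 g'_neq0 ge g'e; apply/eqP => orth.
have g'e_conj := congr1 conjc g'e; rewrite !rmorphM rmorphN /= in g'e_conj.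
have K_comb : g0 * g0'^*%C * (e0 * e0^*%C - e1 * e1^*%C) =
    e0 * e0^*%C * (g0 * g0'^*%C + g1 * g1'^*%C) - e1^*%C * g0'^*%C * (g0 * e1 - g1 * e0)
    + g1 * e0 * (g0'^*%C * - e1^*%C - g1'^*%C * e0^*%C).
  by ring.
move: K_comb; rewrite orth ge g'e_conj !subrr !mulr0 subrr addr0 => /eqP.
rewrite !mulf_eq0 conjc_eq0 subr_eq0 (negbTE K_neq0) orbF.
rewrite (negbTE (collinear_fst_neq0 e0_neq0 g_neq0 ge)).
by rewrite (negbTE (collinear_fst_neq0 e0_neq0 g'_neq0 g'e)).
Qed.

Lemma sin4E (R : realType) (x : R) :
  sin (4 * x) = 4 * (sin x * cos x) * (cos x ^+ 2 - sin x ^+ 2).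
Proof.
have -> : 4 * x = (x + x) + (x + x) by ring.
by rewrite !sinD !cosD; ring.
Qed.

Lemma sinDnatpi (R : realType) (x : R) (m : nat) : sin (x + m%:R * pi) = (-1) ^+ m * sin x.
Proof.
elim: m => [|m IH]; first by rewrite mul0r addr0 expr0 mul1r.
by rewrite -addn1 natrD mulrDl mul1r addrA sinDpi IH exprD expr1; ring.
Qed.

Section Qubits.
Variable R : realType.
Local Notation C := R[i].

Definition bra (u : 'cV[C]_2) (s : 'I_2) : C := (u s 0)^*%C.

Lemma braketE (u v : 'cV[C]_2) : braket u v = bra u 0 * v 0 0 + bra u 1 * v 1 0.
Proof. by rewrite /braket sum_ord2. Qed.

Lemma braket_ket (u : 'cV[C]_2) (s : 'I_2) : braket u (ket R s) = bra u s.
Proof. by rewrite braketE !mxE; case: (ord2P s) => ->; rewrite /= ?mulr1 ?mulr0 ?addr0 ?add0r. Qed.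

Lemma bra_neq0 (u : 'cV[C]_2) : braket u u = 1 -> (bra u 0 != 0) || (bra u 1 != 0).
Proof.
rewrite braketE -negb_and => uu; apply/negP => /andP[/eqP u0 /eqP u1].
by move: uu; rewrite u0 u1 !mul0r addr0 => /eqP; rewrite eq_sym oner_eq0.
Qed.

Lemma bra_det_neq0 (u v : 'cV[C]_2) : braket u u = 1 -> braket v v = 1 -> braket u v = 0 ->
  bra u 0 * bra v 1 != bra u 1 * bra v 0.
Proof.
move=> uu vv uv; apply/eqP => /eqP; rewrite -subr_eq0 => /eqP det0.
have lagrange : (bra u 0 * bra v 1 - bra u 1 * bra v 0) * (u 0 0 * v 1 0 - u 1 0 * v 0 0)
    + braket u v * (u 0 0 * bra v 0 + u 1 0 * bra v 1) = braket u u * braket v v.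
  by rewrite !braketE; ring.
by move: lagrange; rewrite det0 uv uu vv !mul0r addr0 mulr1 => /eqP; rewrite eq_sym oner_eq0.
Qed.

Lemma sqmodM (x y : C) : sqmod (x * y) = sqmod x * sqmod y.
Proof. by case: x => a b; case: y => c d; rewrite /sqmod /=; ring. Qed.

Lemma sqmod_bra (u : 'cV[C]_2) : sqmod (bra u 0) + sqmod (bra u 1) = complex.Re (braket u u).
Proof. by rewrite braketE /bra /sqmod; case: (u 0 0) => a b; case: (u 1 0) => c d /=; ring. Qed.

Lemma coefE (β γ : 'I_2 -> 'cV[C]_2) (j k s t : 'I_2) :
  coef β γ j k s t = bra (β j) s * bra (γ k) t.
Proof. by rewrite /coef !braket_ket. Qed.

Lemma prob_orthonormal (β γ : 'I_2 -> 'cV[C]_2) (j k : 'I_2) :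
  orthonormal_basis β -> orthonormal_basis γ -> prob β γ j k = 4^-1.
Proof.
move=> oβ oγ; have := sqmod_bra (β j); have := sqmod_bra (γ k).
rewrite oβ oγ !eqxx /= => nγ nβ.
rewrite /prob !sum_ord2 !coefE !sqmodM.
rewrite -(addrK (sqmod (bra (β j) 1)) (sqmod (bra (β j) 0))) nβ.
by rewrite -(addrK (sqmod (bra (γ k) 1)) (sqmod (bra (γ k) 0))) nγ; ring.
Qed.

Lemma sigma_n_traceless (nx ny nz : R) : \tr (sigma_n nx ny nz) = 0.
Proof. by rewrite /mxtrace sum_ord2 /sigma_n !mxE /=; ring. Qed.

Lemma sigma_n_neq0 (nx ny nz : R) : nx ^+ 2 + ny ^+ 2 + nz ^+ 2 = 1 -> sigma_n nx ny nz != 0.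
Proof.
move=> n_unit; apply/eqP => /matrixP sigma0.
have := sigma0 0 0; have := sigma0 1 0.
rewrite /sigma_n !mxE /= !mulr1 !mulr0 !addr0 add0r /rC /iC; simpc.
case=> nx0 ny0 [nz0]; move: n_unit; rewrite nx0 ny0 nz0 expr0n /= !addr0 => /eqP.
by rewrite eq_sym oner_eq0.
Qed.

Lemma rC_eq0 (x : R) : (rC x == 0) = (x == 0).
Proof. by apply/eqP/eqP => [[]|->]. Qed.

Lemma iC_neq0 : iC R != 0.
Proof. by apply/eqP => -[] /eqP; rewrite oner_eq0. Qed.

Definition hsqrt2 : C := (rC (Num.sqrt 2))^-1.

Lemma hsqrt2_neq0 : hsqrt2 != 0.
Proof. by rewrite invr_eq0 rC_eq0 gt_eqF // sqrtr_gt0 ltr0n. Qed.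

Lemma conjcN (x : C) : (- x)^*%C = - x^*%C.
Proof. exact: rmorphN. Qed.

Lemma hsqrt2_conj : hsqrt2^*%C = hsqrt2.
Proof. by rewrite /hsqrt2 conjc_inv; congr (_^-1); exact: conjc_real. Qed.

Lemma hsqrt2_sqr : hsqrt2 * hsqrt2 = 2^-1.
Proof.
rewrite /hsqrt2 -invfM.
have -> : rC (Num.sqrt 2) * rC (Num.sqrt 2) = ((Num.sqrt 2 ^+ 2)%:C)%C :> C.
  by rewrite expr2 rmorphM.
by rewrite sqr_sqrtr ?ler0n // rmorph_nat.
Qed.

Lemma ket_plusE (i : 'I_2) : ket_plus R i 0 = hsqrt2.
Proof. by rewrite mxE. Qed.

Lemma ket_minus0E : ket_minus R 0 0 = hsqrt2.
Proof. by rewrite mxE. Qed.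

Lemma ket_minus1E : ket_minus R 1 0 = - hsqrt2.
Proof. by rewrite mxE. Qed.

Section OrthonormalBases.
Variable b : 'I_2 -> 'cV[C]_2.
Hypothesis ob : orthonormal_basis b.

Lemma orthonormal_bra_neq0 (i : 'I_2) : (bra (b i) 0 != 0) || (bra (b i) 1 != 0).
Proof. by apply: bra_neq0; rewrite ob eqxx. Qed.

Lemma orthonormal_bra_det (i i' : 'I_2) : i != i' ->
  bra (b i) 0 * bra (b i') 1 != bra (b i) 1 * bra (b i') 0.
Proof. by move=> ii'; apply: bra_det_neq0; rewrite ob ?eqxx // (negbTE ii'). Qed.

Lemma orthonormal_bra_orth (i i' : 'I_2) : i != i' ->
  bra (b i) 0 * (bra (b i') 0)^*%C + bra (b i) 1 * (bra (b i') 1)^*%C = 0.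
Proof.
by move=> ii'; have := ob i i'; rewrite (negbTE ii') braketE => <-; rewrite /bra !conjcK.
Qed.

End OrthonormalBases.

Definition plus_minus_basis (j : 'I_2) : 'cV[C]_2 := if j == 0 then ket_plus R else ket_minus R.

Definition rotated_basis (e0 e1 : C) (k : 'I_2) : 'cV[C]_2 :=
  if k == 0 then \col_i (if i == 0 then e0^*%C else e1^*%C)
  else \col_i (if i == 0 then - e1 else e0).

Lemma plus_minus_orthonormal : orthonormal_basis plus_minus_basis.
Proof.
move=> j k; rewrite braketE /bra /plus_minus_basis.
case: (ord2P j) (ord2P k) => -> [] ->;
  rewrite /= ?ket_plusE ?ket_minus0E ?ket_minus1E ?conjcN hsqrt2_conj
    ?mulrN ?mulNr ?opprK hsqrt2_sqr;
  by rewrite ?subrr // -mulr2n -[_ *+ 2]mulr_natl mulfV // pnatr_eq0.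
Qed.

Lemma rotated_orthonormal (e0 e1 : C) :
  e0 * e0^*%C + e1 * e1^*%C = 1 -> orthonormal_basis (rotated_basis e0 e1).
Proof.
move=> e_norm j k; rewrite braketE /bra /rotated_basis.
by case: (ord2P j) (ord2P k) => -> [] ->; rewrite /= !mxE /= ?conjcK ?rmorphN /= -?e_norm; ring.
Qed.

Lemma bra_plus_minus :
  [/\ bra (plus_minus_basis 0) 0 = hsqrt2, bra (plus_minus_basis 0) 1 = hsqrt2,
       bra (plus_minus_basis 1) 0 = hsqrt2 & bra (plus_minus_basis 1) 1 = - hsqrt2].
Proof.
by rewrite /bra /plus_minus_basis /= !ket_plusE ket_minus0E ket_minus1E conjcN hsqrt2_conj.
Qed.

Lemma bra_rotated (e0 e1 : C) :
  [/\ bra (rotated_basis e0 e1 0) 0 = e0, bra (rotated_basis e0 e1 0) 1 = e1,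
       bra (rotated_basis e0 e1 1) 0 = - e1^*%C & bra (rotated_basis e0 e1 1) 1 = e0^*%C].
Proof. by rewrite /bra /= !mxE /= ?conjcK ?conjcN. Qed.

Section RemoteOperation.
Variables (σ : 'M[C]_2) (α : R).
Hypotheses (σ_traceless : \tr σ = 0) (σ_neq0 : σ != 0).
Local Notation e0 := (rC (cos α)).
Local Notation e1 := (iC R * rC (sin α)).
Local Notation E := (exp_i_sigma α σ).

Lemma exp_coef_neq0 : (e0 != 0) || (e1 != 0).
Proof.
rewrite mulf_eq0 negb_or iC_neq0 !rC_eq0 /= -negb_and; apply/andP => -[/eqP c0 /eqP s0].
by have := cos2Dsin2 α; rewrite c0 s0 expr0n /= addr0 => /eqP; rewrite eq_sym oner_eq0.
Qed.

Lemma lin_comb_neq0 (x y : C) : (x != 0) || (y != 0) -> x *: 1%:M + y *: σ != 0.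
Proof.
apply: contraTT; rewrite negbK negb_or !negbK => /eqP comb0.
have [-> ->] : x = 0 /\ y = 0.
  by apply: lin_comb_traceless_inj σ_traceless σ_neq0 _; rewrite comb0 !scale0r addr0.
by rewrite eqxx.
Qed.

Lemma lin_comb_scaled_exp_iff (x y : C) :
  (exists c, x *: 1%:M + y *: σ = c *: E) <-> x * e1 = y * e0.
Proof.
rewrite /exp_i_sigma; split=> [[c]|xe].
  by rewrite scalerDr !scalerA => /(lin_comb_traceless_inj σ_traceless σ_neq0) [-> ->]; ring.
have [mu [-> ->]] := collinear_scale exp_coef_neq0 xe.
by exists mu; rewrite scalerDr !scalerA.
Qed.

Lemma realizes_iff (β γ : 'I_2 -> 'cV[C]_2) (j k : 'I_2) :
  realizes σ β γ α j k <->
  (forall i, exists c, residual σ β γ j k i = c *: E) /\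
  (exists i, residual σ β γ j k i != 0).
Proof.
split=> [[chi [lam [chi_neq0 [lam_neq0 T_eq]]]]|[T_mul [i T_neq0]]].
  split=> [i|]; first by exists (chi i 0 * lam).
  case/matrix0Pn: chi_neq0 => i [i']; rewrite ord1 => chi_i; exists i.
  rewrite T_eq scaler_eq0 negb_or mulf_neq0 //= /exp_i_sigma.
  exact: lin_comb_neq0 exp_coef_neq0.
have [c c_spec] := choice T_mul.
exists (\col_i c i), 1; split; [|split; [exact: oner_neq0|]].
  apply/eqP => /matrixP/(_ i 0); rewrite !mxE => ci0.
  by move: T_neq0; rewrite c_spec ci0 scale0r eqxx.
by move=> i'; rewrite mxE mulr1.
Qed.

Lemma realizesP (β γ : 'I_2 -> 'cV[C]_2) (j k : 'I_2) :
  (bra (β j) 0 != 0) || (bra (β j) 1 != 0) -> (bra (γ k) 0 != 0) || (bra (γ k) 1 != 0) ->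
  realizes σ β γ α j k <->
  realizing_pair e0 e1 (bra (β j) 0) (bra (β j) 1) (bra (γ k) 0) (bra (γ k) 1).
Proof.
set b0 := bra (β j) 0; set b1 := bra (β j) 1; set g0 := bra (γ k) 0; set g1 := bra (γ k) 1.
move=> b_neq0 g_neq0; set q : C := 2^-1 * hsqrt2.
have q_neq0 : q != 0 by rewrite mulf_neq0 ?hsqrt2_neq0 // invr_eq0 pnatr_eq0.
have residual0 : residual σ β γ j k 0 = (q * (b0 + b1)) *: (g0 *: 1%:M + g1 *: σ).
  rewrite /residual !coefE ket_plusE ket_minus0E.
  by apply/matrixP => r s; rewrite !mxE -/b0 -/b1 -/g0 -/g1 /q; ring.
have residual1 : residual σ β γ j k 1 = (q * (b0 - b1)) *: (g0 *: 1%:M + (- g1) *: σ).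
  rewrite /residual !coefE ket_plusE ket_minus1E.
  by apply/matrixP => r s; rewrite !mxE -/b0 -/b1 -/g0 -/g1 /q; ring.
have branch_iff (a y : C) : (exists c, a *: (g0 *: 1%:M + y *: σ) = c *: E) <->
    a * (g0 * e1 - y * e0) = 0.
  rewrite scalerDr !scalerA lin_comb_scaled_exp_iff mulrBr !mulrA.
  by split=> [->|/eqP]; [rewrite subrr | rewrite subr_eq0 => /eqP].
have nonzero : exists i, residual σ β γ j k i != 0.
  case/orP: (sum_diff_neq0 b_neq0) => [bsum|bdiff];
    [exists 0; rewrite residual0 | exists 1; rewrite residual1];
    rewrite scaler_eq0 negb_or mulf_neq0 //=; apply: lin_comb_neq0; by rewrite ?oppr_eq0.
apply: iff_trans (realizes_iff β γ j k) _.
split=> [[par _]|[sum_g diff_g]]; last split=> [i|//].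
  split; [move: (par 0); rewrite residual0 | move: (par 1); rewrite residual1];
    by move/branch_iff/eqP; rewrite ?mulNr ?opprK -mulrA mulf_eq0 (negbTE q_neq0) => /eqP.
case: (ord2P i) => ->; [rewrite residual0 | rewrite residual1]; apply/branch_iff;
  by rewrite -mulrA ?mulNr ?opprK ?sum_g ?diff_g mulr0.
Qed.

Lemma exp_coef_norm : e0 * e0^*%C + e1 * e1^*%C = 1.
Proof.
apply/eqP; rewrite eq_complex /=; apply/andP; split; apply/eqP; last by ring.
by rewrite -[RHS](cos2Dsin2 α); ring.
Qed.

Lemma exp_coef_diff : e0 * e0^*%C - e1 * e1^*%C = rC (cos α ^+ 2 - sin α ^+ 2).
Proof. by apply/eqP; rewrite eq_complex /=; apply/andP; split; apply/eqP; ring. Qed.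

Lemma exp_coef_mul : e0 * e1 = iC R * rC (sin α * cos α).
Proof. by apply/eqP; rewrite eq_complex /=; apply/andP; split; apply/eqP; ring. Qed.

Section Outcomes.
Variables β γ : 'I_2 -> 'cV[C]_2.
Hypotheses (oβ : orthonormal_basis β) (oγ : orthonormal_basis γ).
Local Notation b j := (bra (β j)).
Local Notation g k := (bra (γ k)).

Lemma realizes_realizing_pair (j k : 'I_2) :
  realizes σ β γ α j k -> realizing_pair e0 e1 (b j 0) (b j 1) (g k 0) (g k 1).
Proof. exact: (iffLR (realizesP (orthonormal_bra_neq0 oβ j) (orthonormal_bra_neq0 oγ k))). Qed.

Lemma realizes_row_unique (j k k' : 'I_2) :
  realizes σ β γ α j k -> realizes σ β γ α j k' -> k = k'.
Proof.
move=> /realizes_realizing_pair Rk /realizes_realizing_pair Rk'; apply/eqP; apply: contraT => kk'.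
have := orthonormal_bra_det oγ kk'.
by rewrite (realizing_pair_collinear exp_coef_neq0 (orthonormal_bra_neq0 oβ j) Rk Rk') eqxx.
Qed.

Lemma realizes_unique (j k j' k' : 'I_2) : e0 != 0 -> e1 != 0 -> e0 * e0^*%C != e1 * e1^*%C ->
  realizes σ β γ α j k -> realizes σ β γ α j' k' -> (j, k) = (j', k').
Proof.
move=> e0_neq0 e1_neq0 K_neq0 Rjk Rjk'.
have [jj|jj'] := eqVneq j j'.
  by rewrite -jj in Rjk' *; rewrite (realizes_row_unique Rjk Rjk').
have type_of j1 k1 : realizes σ β γ α j1 k1 ->
    (b j1 0 = b j1 1 /\ g k1 0 * e1 = g k1 1 * e0) \/
    (b j1 0 = - b j1 1 /\ g k1 0 * - e1 = g k1 1 * e0).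
  move/realizes_realizing_pair; apply: realizing_pair_generic => //; exact: orthonormal_bra_neq0.
have mixed k1 k2 : g k1 0 * e1 = g k1 1 * e0 -> g k2 0 * - e1 = g k2 1 * e0 -> False.
  move=> ge1 ge2; have [k12|k12] := eqVneq k1 k2.
    rewrite -k12 in ge2.
    exact: not_collinear_both e0_neq0 e1_neq0 (orthonormal_bra_neq0 oγ k1) ge1 ge2.
  have := opposite_collinear_not_orthogonal e0_neq0 K_neq0 (orthonormal_bra_neq0 oγ k1)
    (orthonormal_bra_neq0 oγ k2) ge1 ge2.
  by rewrite orthonormal_bra_orth // eqxx.
have det_jj' := orthonormal_bra_det oβ jj'.
case: (type_of _ _ Rjk) (type_of _ _ Rjk') => -[bj gk] [] [bj' gk'].
- by move: det_jj'; rewrite bj bj' eqxx.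
- by case: (mixed _ _ gk gk').
- by case: (mixed _ _ gk' gk).
- by move: det_jj'; rewrite bj bj' mulNr mulrN eqxx.
Qed.

Lemma success_rate_orthonormal : success_rate σ β γ α =
  \sum_(j < 2) \sum_(k < 2) (if `[< realizes σ β γ α j k >] then 4^-1 else 0).
Proof. by apply: eq_bigr => j _; apply: eq_bigr => k _; rewrite prob_orthonormal. Qed.

Lemma success_rate_le_half : success_rate σ β γ α <= 2^-1.
Proof.
rewrite success_rate_orthonormal (_ : 2^-1 = \sum_(j < 2) 4^-1 :> R); last first.
  by rewrite sum_ord2; lra.
apply: ler_sum => j _; apply: sum_indicator_le; first by rewrite invr_ge0 ler0n.
exact: realizes_row_unique.
Qed.

Lemma success_rate_le_quarter : e0 != 0 -> e1 != 0 -> e0 * e0^*%C != e1 * e1^*%C ->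
  success_rate σ β γ α <= 4^-1.
Proof.
move=> e0_neq0 e1_neq0 K_neq0; rewrite success_rate_orthonormal pair_big /=.
apply: (sum_indicator_le (P := fun p => realizes σ β γ α p.1 p.2)).
  by rewrite invr_ge0 ler0n.
by move=> [j k] [j' k']; exact: realizes_unique.
Qed.

End Outcomes.

Lemma realizes_plus_minus_rotated (j k : 'I_2) :
  realizing_pair e0 e1 (bra (plus_minus_basis j) 0) (bra (plus_minus_basis j) 1)
    (bra (rotated_basis e0 e1 k) 0) (bra (rotated_basis e0 e1 k) 1) ->
  realizes σ plus_minus_basis (rotated_basis e0 e1) α j k.
Proof.
apply: (iffRL (realizesP _ _)); first exact: (orthonormal_bra_neq0 plus_minus_orthonormal).
exact: (orthonormal_bra_neq0 (rotated_orthonormal exp_coef_norm)).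
Qed.

Lemma max_success_rate_half : e0 * e1 = 0 \/ e0 * e0^*%C = e1 * e1^*%C ->
  max_success_rate σ α 2^-1.
Proof.
move=> special; have oβ := plus_minus_orthonormal.
have oγ := rotated_orthonormal exp_coef_norm.
have [b00 b01 b10 b11] := bra_plus_minus; have [g00 g01 g10 g11] := bra_rotated e0 e1.
have q_ge0 : 0 <= 4^-1 :> R by rewrite invr_ge0 ler0n.
have row0 : (4^-1 : R) <= \sum_(k < 2)
    (if `[< realizes σ plus_minus_basis (rotated_basis e0 e1) α 0 k >] then 4^-1 else 0).
  apply: (sum_indicator_ge (i := 0)) q_ge0 _; apply: realizes_plus_minus_rotated.
  by rewrite b00 b01 g00 g01; exact: realizing_pair_plus.
have row1 : (4^-1 : R) <= \sum_(k < 2)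
    (if `[< realizes σ plus_minus_basis (rotated_basis e0 e1) α 1 k >] then 4^-1 else 0).
  case: special => [e01|K0];
    [apply: (sum_indicator_ge (i := 0)) q_ge0 _ | apply: (sum_indicator_ge (i := 1)) q_ge0 _];
    apply: realizes_plus_minus_rotated; rewrite b10 b11 ?g00 ?g01 ?g10 ?g11;
    apply: realizing_pair_minus.
    by rewrite (mulrC e1) e01 addr0.
  by rewrite mulNr [_^*%C * e1]mulrC [_^*%C * e0]mulrC K0 addNr.
split=> [|β γ]; last exact: success_rate_le_half.
exists plus_minus_basis, (rotated_basis e0 e1); do 2 split => //.
apply/le_anti; rewrite success_rate_le_half //= success_rate_orthonormal // sum_ord2.
by rewrite (_ : 2^-1 = 4^-1 + 4^-1 :> R) ?lerD //; lra.
Qed.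

Lemma max_success_rate_quarter : e0 != 0 -> e1 != 0 -> e0 * e0^*%C != e1 * e1^*%C ->
  max_success_rate σ α 4^-1.
Proof.
move=> e0_neq0 e1_neq0 K_neq0; have oβ := plus_minus_orthonormal.
have oγ := rotated_orthonormal exp_coef_norm.
split=> [|β γ oβ' oγ']; last exact: success_rate_le_quarter.
exists plus_minus_basis, (rotated_basis e0 e1); do 2 split => //.
apply/le_anti; rewrite success_rate_le_quarter //= success_rate_orthonormal // pair_big /=.
apply: (sum_indicator_ge (P := fun p => realizes σ _ _ α p.1 p.2) (i := (0, 0))).
  by rewrite invr_ge0 ler0n.
apply: realizes_plus_minus_rotated.
have [-> -> _ _] := bra_plus_minus; have [-> -> _ _] := bra_rotated e0 e1.
exact: realizing_pair_plus.
Qed.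

Lemma max_success_rate_sin4_eq0 : sin (4 * α) = 0 -> max_success_rate σ α 2^-1.
Proof.
rewrite sin4E => /eqP; rewrite !mulf_eq0 pnatr_eq0 /= => /orP[sc0|K0].
  apply: max_success_rate_half; left; apply/eqP.
  by rewrite exp_coef_mul mulf_eq0 rC_eq0 mulf_eq0 sc0 orbT.
apply: max_success_rate_half; right; apply/eqP; rewrite -subr_eq0 exp_coef_diff.
by rewrite rC_eq0.
Qed.

Lemma max_success_rate_sin4_neq0 : sin (4 * α) != 0 -> max_success_rate σ α 4^-1.
Proof.
rewrite sin4E !mulf_eq0 !negb_or pnatr_eq0 /= => /andP[/andP[sα cα] K].
apply: max_success_rate_quarter; first by rewrite rC_eq0.
  by rewrite mulf_neq0 ?iC_neq0 ?rC_eq0.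
by rewrite -subr_eq0 exp_coef_diff rC_eq0.
Qed.

End RemoteOperation.
End Qubits.

Theorem proposition2 (R : realType) (nx ny nz : R) (alpha : R) :
  nx ^+ 2 + ny ^+ 2 + nz ^+ 2 = 1 ->
  0 <= alpha -> alpha < 2 * pi ->
  ((exists m : 'I_8, alpha = m%:R * pi / 4) ->
     max_success_rate (sigma_n nx ny nz) alpha (2%:R^-1)) /\
  ((exists m : 'I_8, m%:R * pi / 4 < alpha < m.+1%:R * pi / 4) ->
     max_success_rate (sigma_n nx ny nz) alpha (4%:R^-1)).
Proof.
move=> n_unit _ _; have σ_traceless := sigma_n_traceless nx ny nz.
have σ_neq0 := sigma_n_neq0 n_unit.
split=> [[m ->]|[m /andP[lo hi]]].
  apply: max_success_rate_sin4_eq0 => //.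
  by rewrite (_ : 4 * _ = 0 + m%:R * pi) ?sinDnatpi ?sin0 ?mulr0 //; lra.
apply: max_success_rate_sin4_neq0 => //.
rewrite -(subrK (m%:R * pi) (4 * alpha)) sinDnatpi mulf_neq0 ?expf_neq0 ?oppr_eq0 ?oner_eq0 //.
by rewrite gt_eqF // sin_gt0_pi //; apply/andP; split; lra.
Qed.
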